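(* Let $(X^t)_{t\ge1}$ be real random variables with $X^1>0$ deterministic, and let $a,t_0,C_1,C_2>0$ be constants with $a>1$ and $t_0\ge a$. Suppose that for every $t\ge1$, $$\mathbb E[\exp(X^{t+1})]\le\mathbb E\Big[\exp\Big(\Big(1-\frac{a}{t+t_0}\Big)X^t+\frac{C_1}{t+t_0}+\frac{C_2}{(t+t_0)^2}\Big)\Big].$$ Then for every $t\ge1$, $$\mathbb E[\exp(X^{t+1})]\le\exp\Big(\frac{(t_0+1)^aX^1}{(t+1+t_0)^a}+\frac{C_1}{a}+\frac{3C_2/(a-1)}{t+1+t_0}\Big).$$
   Context: All expectations are assumed to be finite (possibly $+\infty$ on the right-hand side of the hypothesis makes it vacuous). *)

From HB Require Import structures.
From mathcomp Require Import all_boot all_order all_algebra.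
From mathcomp Require Import all_classical all_reals all_analysis.

From HB Require Import structures.
From mathcomp Require Import all_boot all_order all_algebra.
From mathcomp Require Import all_classical all_reals all_analysis.
From mathcomp Require Import ring lra.
Import Order.TTheory GRing.Theory Num.Theory.
Local Open Scope ring_scope.

(* By convexity of exp, for 0 <= lam <= 1 a bound E[exp Y] <= exp m gives
   E[exp (lam Y + c)] <= exp (c + lam m).  It therefore suffices that
   A(s) := B/s^a + C1/a + K/s, with B = (t0+1)^a X^1 and K = 3 C2/(a-1), is a
   supersolution of m' = C1/s + C2/s^2 + (1 - a/s) m along s = t + t0 and
   that A(t0+1) >= X^1.  Term by term, the supersolution property comes down
   to (1 - a/s)(1 + 1/s)^a <= exp(-a/s) exp(a/s) = 1. *)

Lemma expR_convex_comb (R : realType) (lam x y : R) : 0 <= lam <= 1 ->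
  expR (lam * x + (1 - lam) * y) <= lam * expR x + (1 - lam) * expR y.
Proof.
by move=> /andP[l0 l1]; have := convex_expR (Itv01 l0 l1) x y; rewrite !convRE.
Qed.

Section ExpectationExpR.
Context {d : measure_display} {T : measurableType d} {R : realType}.
Context {P : probability T R}.

Lemma expectation_expR_affine_le (Y : {RV P >-> R}) (lam c m : R) :
  P.-integrable setT (fun w => (expR (Y w))%:E) -> 0 <= lam <= 1 ->
  ('E_P[fun w => expR (Y w)] <= (expR m)%:E)%E ->
  ('E_P[fun w => expR (lam * Y w + c)] <= (expR (c + lam * m))%:E)%E.
Proof.
move=> iY /[dup] lam01 /andP[l0 l1] hE.
(* Convexity between y and the fixed point m bounds the integrand by an affine
   function of exp y. *)
pose k := expR (c - (1 - lam) * m).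
have kl : 0 <= k * lam by rewrite mulr_ge0 ?expR_ge0.
have k1 : 0 <= k * (1 - lam) by rewrite mulr_ge0 ?expR_ge0 ?subr_ge0.
have pointwise w :
    expR (lam * Y w + c) <= expR (Y w) * (k * lam) + k * (1 - lam) * expR m.
  have -> : lam * Y w + c = (c - (1 - lam) * m) + (lam * Y w + (1 - lam) * m).
    by ring.
  rewrite expRD [expR (Y w) * _]mulrC -!mulrA -mulrDr.
  by rewrite ler_wpM2l ?expR_ge0 ?expR_convex_comb.
have mE : measurable_fun setT (fun w => expR (Y w)) by exact: measurableT_comp.
have mA : measurable_fun setT
    ((k * lam) \o* (fun w => expR (Y w)) \+ cst (k * (1 - lam) * expR m))%R.
  by apply: measurable_realfun.measurable_funD => //;
     exact: measurable_realfun.measurable_funM.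
apply: (@le_trans _ _ ('E_P[((k * lam) \o* (fun w => expR (Y w))
                              \+ cst (k * (1 - lam) * expR m))%R])%E).
  apply: expectation_le.
  - apply: measurableT_comp => //.
    by apply: measurable_realfun.measurable_funD => //;
       exact: measurable_realfun.measurable_funM.
  - exact: mA.
  - by move=> w; exact: expR_ge0.
  - by move=> w /=; rewrite addr_ge0 // mulr_ge0 // expR_ge0.
  - exact: aeW.
have iL : (fun w => expR (Y w)) \in Lfun P 1 by exact/Lfun1_integrable.
rewrite expectationD ?Lfun_cst ?Lfun_scale // expectationZl // expectation_cst.
have -> : expR (c + lam * m) = k * lam * expR m + k * (1 - lam) * expR m.
  by rewrite -mulrDl -mulrDr subrKC mulr1 /k -expRD; congr expR; ring.
by rewrite EFinD leeD2r // (EFinM (k * lam)) lee_wpmul2l ?lee_fin.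
Qed.

End ExpectationExpR.

Lemma powR_succ_contraction (R : realType) (a s : R) : 0 < a -> a < s ->
  (1 - a / s) * (s + 1) `^ a <= s `^ a.
Proof.
move=> a0 as_.
have s0 : 0 < s by lra.
have s_succ : s + 1 = s * (1 + s^-1) by rewrite mulrDr mulr1 divff ?gt_eqF.
have pow_le : (1 + s^-1) `^ a <= expR (a / s).
  rewrite /powR gt_eqF ?addr_gt0 ?invr_gt0 // ler_expR.
  by rewrite ler_pM2l // le_ln1Dx // (lt_trans (ltrN10 R)) ?invr_gt0.
have lam_le : 1 - a / s <= expR (- (a / s)) := expR_ge1Dx _.
have lam_ge0 : 0 <= 1 - a / s by rewrite subr_ge0 ler_pdivrMr // mul1r ltW.
rewrite s_succ powRM ?addr_ge0 ?invr_ge0 ?(ltW s0) //.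
rewrite mulrCA -[leRHS]mulr1 ler_wpM2l ?powR_ge0 //.
apply: le_trans (ler_wpM2l lam_ge0 pow_le) _.
apply: le_trans (ler_wpM2r (expR_ge0 _) lam_le) _.
by rewrite -expRD addNr expR0.
Qed.

Definition supersolution {R : realType} (a B C1 C2 s : R) :=
  B / s `^ a + C1 / a + (3 * C2 / (a - 1)) / s.

Lemma supersolution_step (R : realType) (a B C1 C2 s : R) :
  1 < a -> 0 <= B -> 0 <= C2 -> a < s ->
  C1 / s + C2 / s ^+ 2 + (1 - a / s) * supersolution a B C1 C2 s
  <= supersolution a B C1 C2 (s + 1).
Proof.
move=> a_gt1 B_ge0 C2_ge0 as_.
have a0 : 0 < a by lra.
have s0 : 0 < s by lra.
have ps0 : 0 < s `^ a by exact: powR_gt0.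
have qs0 : 0 < (s + 1) `^ a by rewrite powR_gt0 ?addr_gt0.
have power_term : (1 - a / s) * (B / s `^ a) <= B / (s + 1) `^ a.
  rewrite -subr_ge0.
  have -> : B / (s + 1) `^ a - (1 - a / s) * (B / s `^ a)
      = B * (s `^ a - (1 - a / s) * (s + 1) `^ a) / (s `^ a * (s + 1) `^ a).
    by field; rewrite ?gt_eqF.
  by rewrite divr_ge0 ?mulr_ge0 ?subr_ge0 ?powR_succ_contraction // ltW ?mulr_gt0.
have constant_term : (1 - a / s) * (C1 / a) + C1 / s = C1 / a.
  by field; rewrite ?gt_eqF.
have inverse_term :
    (1 - a / s) * (3 * C2 / (a - 1) / s) + C2 / s ^+ 2 <= 3 * C2 / (a - 1) / (s + 1).
  rewrite -subr_ge0.
  have -> : 3 * C2 / (a - 1) / (s + 1)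
              - ((1 - a / s) * (3 * C2 / (a - 1) / s) + C2 / s ^+ 2)
      = C2 * ((2 * s - 1) * (a - 1) + 3 * a) / ((a - 1) * s ^+ 2 * (s + 1)).
    by field; rewrite ?gt_eqF ?subr_gt0 ?addr_gt0.
  apply: divr_ge0; first by rewrite mulr_ge0 // addr_ge0 // mulr_ge0; lra.
  by rewrite !mulr_ge0 // ?exprn_ge0; lra.
rewrite /supersolution !mulrDr; lra.
Qed.

Theorem lemma8 (d : measure_display) (T : measurableType d) (R : realType)
  (P : probability T R) (X : nat -> {RV P >-> R})
  (x1 a t0 C1 C2 : R) :
  1 < a -> a <= t0 -> 0 < C1 -> 0 < C2 ->
  0 < x1 -> (forall w, X 1%N w = x1) ->
  (forall t : nat, (1 <= t)%N ->
     P.-integrable setT (fun w => (expR (X t w))%:E)) ->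
  (forall t : nat, (1 <= t)%N ->
     ('E_P[fun w => expR (X t.+1 w)] <=
      'E_P[fun w => expR ((1 - a / (t%:R + t0)) * X t w
                          + C1 / (t%:R + t0) + C2 / (t%:R + t0) ^+ 2)])%E) ->
  forall t : nat, (1 <= t)%N ->
    ('E_P[fun w => expR (X t.+1 w)] <=
     (expR ((t0 + 1) `^ a * x1 / (t%:R + 1 + t0) `^ a
            + C1 / a + (3 * C2 / (a - 1)) / (t%:R + 1 + t0)))%:E)%E.
Proof.
move=> a_gt1 at0 C1_gt0 C2_gt0 x1_gt0 X1E iX hstep.
pose A := supersolution a ((t0 + 1) `^ a * x1) C1 C2.
have B_ge0 : 0 <= (t0 + 1) `^ a * x1 by rewrite mulr_ge0 ?powR_ge0 ?ltW.
suff bound n : ('E_P[fun w => expR (X n.+1 w)] <= (expR (A (n.+1%:R + t0)))%:E)%E.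
  by move=> t _; have := bound t; rewrite -addn1 natrD.
elim: n => [|n IH].
  rewrite (_ : (fun w => _) = cst (expR x1)); last by apply: funext => w; rewrite X1E.
  rewrite expectation_cst lee_fin ler_expR /A /supersolution (addrC 1 t0).
  have t0_gt0 : 0 < t0 + 1 by lra.
  rewrite mulrAC divff ?mul1r ?gt_eqF ?powR_gt0 //.
  have : 0 < C1 / a by rewrite divr_gt0 //; lra.
  have : 0 < 3 * C2 / (a - 1) / (t0 + 1) by rewrite !divr_gt0 ?mulr_gt0 //; lra.
  lra.
set s := n.+1%:R + t0 in IH.
have as_ : a < s by have := ltr0Sn R n; rewrite /s; lra.
have lam01 : 0 <= 1 - a / s <= 1.
  by rewrite subr_ge0 lerBlDr lerDl ler_pdivrMr ?divr_ge0 ?mul1r ?ltW //; lra.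
apply: le_trans (hstep n.+1 isT) _.
under eq_fun do rewrite -/s -addrA.
apply: le_trans (expectation_expR_affine_le (X n.+1) _ _ _ (iX n.+1 isT) lam01 IH) _.
rewrite lee_fin ler_expR (_ : n.+2%:R + t0 = s + 1); last by rewrite /s -addn1 natrD; ring.
exact: supersolution_step a_gt1 B_ge0 (ltW C2_gt0) as_.
Qed.
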